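(* Let $G$ be a $2$-edge-connected graph and $e\in E(G)$. Then the inequality $x_e\ge 0$ defines a facet of $\mathrm{TECSP}(G)$ if and only if $e$ is not contained in any cut of size exactly $3$.
   Context: All graphs are finite, simple and undirected. For $\emptyset\subsetneq S\subsetneq V(G)$, $\delta(S)$ is the set of edges with exactly one endpoint in $S$ (a cut); a cut with $k$ edges is a $k$-cut. An edge $e$ is a bridge if $\{e\}=\delta(S)$ for some $S$. A graph is $2$-edge-connected if it is connected and has no bridges; the empty graph and a single vertex are $2$-edge-connected. $\chi^H\in\{0,1\}^{E(G)}$ is the incidence vector of $E(H)$, and $\mathrm{TECSP}(G)=\mathrm{conv}\{\chi^H : H\subseteq G\text{ is }2\text{-edge-connected}\}\subseteq\mathbb{R}^{E(G)}$. A facet is a face of dimension $\dim(\mathrm{TECSP}(G))-1$. *)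

From HB Require Import structures.
From mathcomp Require Import all_boot all_order all_algebra.
Set Implicit Arguments. Unset Strict Implicit. Unset Printing Implicit Defensive.
Import Order.TTheory GRing.Theory Num.Theory.
Local Open Scope ring_scope.

(* A finite simple graph G is given by a vertex type V, an edge type Ed and
   the endpoint map [ends : Ed -> {set V}] with #|ends f| = 2 (no loops) and
   [ends] injective (no parallel edges). *)

Section Graphs.
Variables (V Ed : finType) (ends : Ed -> {set V}).

Definition cut (F : {set Ed}) (S : {set V}) : {set Ed} :=
  [set f in F | #|ends f :&: S| == 1%N].

Definition is_subgraph (W : {set V}) (F : {set Ed}) : Prop :=
  forall f, f \in F -> ends f \subset W.

Definition adjF (F : {set Ed}) : rel V :=
  fun x y => [exists f in F, ends f == [set x; y]].

Definition sub_connected (W : {set V}) (F : {set Ed}) : Prop :=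
  forall x y, x \in W -> y \in W -> connect (adjF F) x y.

Definition is_bridge (W : {set V}) (F : {set Ed}) (f : Ed) : Prop :=
  exists S : {set V}, [/\ S \subset W, S != set0, S != W & cut F S = [set f]].

Definition two_edge_connected (W : {set V}) (F : {set Ed}) : Prop :=
  sub_connected W F /\ forall f, ~ is_bridge W F f.

Definition tec_edgeset (F : {set Ed}) : Prop :=
  exists W : {set V}, is_subgraph W F /\ two_edge_connected W F.

Definition in_3cut (e : Ed) : Prop :=
  exists S : {set V}, [/\ S != set0, S != setT, e \in cut setT S
                        & #|cut setT S| = 3%N].

Variable R : realFieldType.

Definition vec := {ffun Ed -> R^o}.

Definition chi (F : {set Ed}) : vec := [ffun f => if f \in F then 1 else 0].

Definition TECSP (x : vec) : Prop :=
  exists lam : {ffun {set Ed} -> R},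
    [/\ forall F, 0 <= lam F,
        forall F, lam F != 0 -> tec_edgeset F,
        \sum_F lam F = 1
      & x = \sum_F lam F *: chi F].

End Graphs.

Definition aff_indep (R : fieldType) (vT : vectType R) (s : seq vT) : bool :=
  if s is x0 :: s' then free [seq y - x0 | y <- s'] else true.

(* affine dimension of a set X: the maximum number of affinely independent
   points of X, minus one (so the empty set has dimension -1) *)
Definition is_affdim (R : fieldType) (vT : vectType R) (X : vT -> Prop) (d : int)
  : Prop :=
  (exists s : seq vT, [/\ forall x, x \in s -> X x, aff_indep s
                        & (size s)%:Z = d + 1])
  /\ (forall s : seq vT, (forall x, x \in s -> X x) -> aff_indep s ->
        (size s)%:Z <= d + 1).

Definition nonneg_facet (Ed : finType) (R : realFieldType)
  (P : vec Ed R -> Prop) (e : Ed) : Prop :=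
  (forall x, P x -> 0 <= x e) /\
  exists d : int, is_affdim P d /\ is_affdim (fun x => P x /\ x e = 0) (d - 1).

From HB Require Import structures.
From mathcomp Require Import all_boot all_order all_algebra.
From Stdlib Require Import ClassicalEpsilon.
Import Order.TTheory GRing.Theory Num.Theory.
Set Implicit Arguments. Unset Strict Implicit. Unset Printing Implicit Defensive.

(* Since the empty graph is 2-edge-connected, TECSP(G) contains 0, so its dimension is that of
   the span U of the incidence vectors of 2-edge-connected subgraphs, and the face x_e = 0 has
   the dimension of the span U_e of those avoiding e.  Such a subgraph never meets a cut of G in
   exactly one edge, so its incidence vector is constant on the classes of the equivalence
   "f = g or {f, g} is a 2-cut" (transitive because cuts are closed under symmetric difference).
   If e lies in a 3-cut {e, f, g}, every vector of U_e takes equal values at f and g, while some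
   2-edge-connected subgraph contains e and f but not g: U_e has codimension at least 2.
   Otherwise every class indicator lies in U_e + R 1: removing the class of e, or the classes
   of e and of any other edge, leaves a bridgeless spanning subgraph (a cut crossing it once
   would reduce to a 1-cut, a 2-cut through e, or a 3-cut through e), and the edge sets of its
   components are 2-edge-connected subgraphs avoiding e. *)

Section AffineDimension.
Variables (K : fieldType) (vT : vectType K).
Local Open Scope ring_scope.

Lemma free_subseq_span (Y : seq vT) :
  exists b, [/\ {subset b <= Y}, free b & <<b>>%VS = <<Y>>%VS].
Proof.
elim: Y => [|y Y [b [sbY freeb spanb]]]; first by exists [::]; rewrite nil_free.
have [yb | ybN] := boolP (y \in <<b>>%VS).
- exists b; split => //; first by move=> x /sbY; rewrite inE orbC => ->.
  by rewrite span_cons -spanb; apply/esym/addv_idPr; rewrite -memvE.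
- exists (y :: b); split; last by rewrite !span_cons spanb.
  + by move=> x; rewrite !inE => /orP[->|/sbY ->]; rewrite ?orbT.
  + by rewrite free_cons ybN freeb.
Qed.

Lemma is_affdim_span (P : vT -> Prop) (Y : seq vT) :
  P 0 -> {in Y, forall y, P y} -> (forall x, P x -> x \in <<Y>>%VS) ->
  is_affdim P (\dim <<Y>>)%:Z.
Proof.
move=> P0 PY YP; split.
- have [b [sbY freeb spanb]] := free_subseq_span Y.
  exists (0 :: b); split.
  + by move=> x; rewrite inE => /orP[/eqP-> //|/sbY]; apply: PY.
  + by rewrite /aff_indep (eq_map (fun y => subr0 y)) map_id.
  + by rewrite -spanb (eqnP freeb) /= -addn1 PoszD.
- move=> [|x0 s] Ps indep /=; first by rewrite -PoszD lez_nat.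
  rewrite -addn1 PoszD lerD2r lez_nat -(size_map (fun y => y - x0)) -(eqnP indep).
  apply/dimvS/span_subvP => _ /mapP [y ys ->].
  by apply: memvB; apply: YP; apply: Ps; rewrite inE ?ys ?orbT ?eqxx.
Qed.

Lemma is_affdim_unique (P : vT -> Prop) d1 d2 :
  is_affdim P d1 -> is_affdim P d2 -> d1 = d2.
Proof.
move=> [[s1 [P1 i1 e1]] b1] [[s2 [P2 i2 e2]] b2].
by apply/(addIr 1)/le_anti; rewrite -{1}e1 (b2 _ P1 i1) -e2 (b1 _ P2 i2).
Qed.

Lemma dim_add_line (U : {vspace vT}) v :
  v \notin U -> \dim (U + <[v]>) = (\dim U).+1.
Proof.
move=> vU; rewrite dimv_disjoint_sum; last first.
  apply/eqP; rewrite -subv0; apply/subvP => x /memv_capP [+ /vlineP [k xE]]; rewrite xE.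
  have [-> _ | k0] := eqVneq k 0; first by rewrite scale0r mem0v.
  by move/(memvZ k^-1); rewrite scalerK ?(negbTE vU).
have v0 : v != 0 by apply: contraNneq vU => ->; rewrite mem0v.
by rewrite dim_vline v0 addn1.
Qed.

Lemma linear_span0 (phi : vT -> K^o) (X : seq vT) :
  linear phi -> {in X, forall y, phi y = 0} -> {in <<X>>%VS, forall u, phi u = 0}.
Proof.
move=> linphi X0 u uX; rewrite (coord_span (X := in_tuple X) uX).
have phi0 : phi 0 = 0.
  have := linphi 1 0 0; rewrite !scale1r addr0 => phi00.
  by apply/(addrI (phi 0)); rewrite addr0 -phi00.
apply: (big_ind (fun w => phi w = 0)) => // [w1 w2 p1 p2|i _].
  by rewrite -[w1]scale1r linphi p1 p2 scaler0 add0r.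
by rewrite -[_ *: _]addr0 linphi phi0 X0 ?scaler0 ?addr0 // mem_nth.
Qed.

End AffineDimension.

Definition symdiff (T : finType) (A B : {set T}) : {set T} := (A :\: B) :|: (B :\: A).

Lemma in_symdiff (T : finType) (A B : {set T}) x :
  (x \in symdiff A B) = (x \in A) (+) (x \in B).
Proof. by rewrite !inE; case: (x \in A); case: (x \in B). Qed.

Lemma cards3_mem (T : finType) (A : {set T}) a : a \in A -> #|A| = 3%N ->
  exists b c, [/\ A = [set a; b; c], a != b, a != c & b != c].
Proof.
move=> aA A3; have /cards2P [b [c [bc Aa]]] : #|A :\ a| == 2%N.
  by move: A3; rewrite (cardsD1 a) aA add1n => -[->].
have [ab ac] : b \in A :\ a /\ c \in A :\ a by rewrite Aa !inE !eqxx orbT.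
exists b, c; split => //; first by rewrite -(setD1K aA) Aa setUA.
- by rewrite eq_sym; case/setD1P: ab.
- by rewrite eq_sym; case/setD1P: ac.
Qed.

Lemma card_setI_pair (T : finType) (a b : T) (S : {set T}) : a != b ->
  #|[set a; b] :&: S| = ((a \in S) + (b \in S))%N.
Proof.
move=> ab; have memI x : (x \in [set a; b] :&: S) = (x == a) && (a \in S) || (x == b) && (b \in S).
  rewrite !inE; case: (eqVneq x a) => [->|_]; first by rewrite (negbTE ab) /= orbF.
  by case: (eqVneq x b) => [->|].
case aS: (a \in S); case bS: (b \in S).
- rewrite (_ : _ :&: _ = [set a; b]) ?cards2 ?ab //.
  by apply/setP => x; rewrite memI aS bS !inE !andbT.
- rewrite (_ : _ :&: _ = [set a]) ?cards1 //.
  by apply/setP => x; rewrite memI aS bS !inE andbT andbF orbF.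
- rewrite (_ : _ :&: _ = [set b]) ?cards1 //.
  by apply/setP => x; rewrite memI aS bS !inE andbT andbF.
- rewrite (_ : _ :&: _ = set0) ?cards0 //.
  by apply/setP => x; rewrite memI aS bS !inE !andbF.
Qed.

Section Cuts.
Variables (V Ed : finType) (ends : Ed -> {set V}).
Hypothesis card_ends : forall f, #|ends f| = 2%N.

Local Notation ct S := (cut ends setT S).

Lemma cutE F S : cut ends F S = F :&: ct S.
Proof. by apply/setP => f; rewrite !inE. Qed.

Lemma cut_symdiff F S Y : cut ends F (symdiff S Y) = symdiff (cut ends F S) (cut ends F Y).
Proof.
apply/setP => f; rewrite in_symdiff !inE.
have /cards2P [a [b [ab ->]]] : #|ends f| == 2%N by rewrite card_ends.
rewrite !card_setI_pair // !in_symdiff.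
by case: (f \in F); case: (a \in S); case: (a \in Y); case: (b \in S); case: (b \in Y).
Qed.

Lemma cut0 F : cut ends F set0 = set0.
Proof. by apply/setP => f; rewrite !inE setI0 cards0 andbF. Qed.

Lemma cut_subgraph W F S : is_subgraph ends W F -> cut ends F (W :&: S) = cut ends F S.
Proof.
move=> sub; apply/setP => f; rewrite !inE.
by case fF: (f \in F) => //=; rewrite setIA (setIidPl (sub f fF)).
Qed.

Lemma cut_subgraph_full W F : is_subgraph ends W F -> cut ends F W = set0.
Proof.
move=> sub; rewrite -[W]setIT cut_subgraph //; apply/setP => f.
by rewrite !inE setIT card_ends andbF.
Qed.

Lemma bridge_of_cut W F (S : {set V}) h : is_subgraph ends W F -> S \subset W ->
  cut ends F S = [set h] -> is_bridge ends W F h.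
Proof.
move=> sub SW Sh; exists S; split => //; apply/eqP => S0; move: Sh.
  by rewrite S0 cut0 => /setP/(_ h); rewrite !inE eqxx.
by rewrite S0 (cut_subgraph_full sub) => /setP/(_ h); rewrite !inE eqxx.
Qed.

Lemma cut_neq1 F : (forall h, ~ is_bridge ends setT F h) ->
  forall S h, cut ends F S != [set h].
Proof.
move=> nb S h; apply/eqP => Sh; apply: (nb h).
by apply: bridge_of_cut Sh; [move=> f _ | ]; apply: subsetT.
Qed.

Lemma bridgeless_spanning W F : is_subgraph ends W F ->
  (forall h, ~ is_bridge ends W F h) -> forall h, ~ is_bridge ends setT F h.
Proof.
move=> sub nb h [S [_ _ _ Sh]]; apply: (nb h).
by apply: (bridge_of_cut sub (subsetIl W S)); rewrite cut_subgraph.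
Qed.

Lemma tec_cut_neq1 F : tec_edgeset ends F -> forall S h, F :&: ct S != [set h].
Proof.
move=> [W [sub [_ nb]]] S h; rewrite -cutE.
by apply: cut_neq1; apply: bridgeless_spanning sub nb.
Qed.

Lemma tec_cut_pair F S a b : tec_edgeset ends F -> a \in ct S -> b \in ct S ->
  F :&: ct S \subset [set a; b] -> (a \in F) = (b \in F).
Proof.
move=> tF aS bS sub.
have single x y : x \in ct S -> x \in F -> y \notin F -> F :&: ct S \subset [set x; y] ->
    F :&: ct S = [set x].
  move=> xS xF yF sub'; apply/eqP; rewrite eqEsubset sub1set inE xF xS !andbT.
  apply/subsetP => z zFS; have := subsetP sub' z zFS; rewrite !inE => /orP[//|/eqP zy].
  by move: zFS; rewrite zy inE (negbTE yF).
case aF: (a \in F); case bF: (b \in F) => //.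
  by case/eqP: (tec_cut_neq1 tF S a); rewrite (single a b) ?bF.
by case/eqP: (tec_cut_neq1 tF S b); rewrite (single b a) ?aF // setUC.
Qed.

Lemma cut_proper S f : f \in ct S -> S != set0 /\ S != setT.
Proof.
move=> fS; split; apply/eqP => SE; move: fS; rewrite SE ?cut0 ?in_set0 //.
by rewrite cut_subgraph_full ?in_set0 // => g _; apply: subsetT.
Qed.

Lemma in_3cut_of_cut S x y z : ct S = [set x; y; z] -> x != y -> x != z -> y != z ->
  in_3cut ends x.
Proof.
move=> Sxyz xy xz yz; have xS : x \in ct S by rewrite Sxyz !inE eqxx.
exists S; have [S0 ST] := cut_proper xS; split => //.
by rewrite Sxyz -setUA cardsU1 cards2 !inE negb_or xy xz yz.
Qed.

Lemma adjF_connect_sym F : connect_sym (adjF ends F).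
Proof. by apply: sym_connect_sym => a b; rewrite /adjF setUC. Qed.

Section Components.
Variable D : {set Ed}.

Definition component x := [set y | connect (adjF ends D) x y].
Definition components := [set component x | x : V].
Definition induced_edges (K : {set V}) := [set f in D | ends f \subset K].

Lemma component_closed x f a : f \in D -> a \in ends f -> a \in component x ->
  ends f \subset component x.
Proof.
move=> fD af; rewrite inE => xa; apply/subsetP => y yf; rewrite inE.
have [-> // | ya] := eqVneq y a.
apply: connect_trans xa (connect1 _); apply/existsP; exists f; rewrite fD eq_sym eqEcard.
by rewrite subUset !sub1set af yf card_ends cards2 (eq_sym a) ya.
Qed.

Lemma induced_component_mem f a : f \in D -> a \in ends f -> f \in induced_edges (component a).
Proof. by move=> fD af; rewrite inE fD (component_closed fD af) // inE connect0. Qed.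

Lemma component_of_induced K f a : K \in components -> f \in induced_edges K -> a \in ends f ->
  K = component a.
Proof.
case/imsetP => y _ -> /[!inE] /andP[_ fK] af.
have ya : connect (adjF ends D) y a by move: (subsetP fK a af); rewrite inE.
by apply/setP => z; rewrite !inE (same_connect (adjF_connect_sym D) ya).
Qed.

Lemma component_connected x : sub_connected ends (component x) (induced_edges (component x)).
Proof.
set K := component x; set adjK := adjF ends (induced_edges K).
have walk p u : u \in K -> path (adjF ends D) u p -> connect adjK u (last u p).
  elim: p u => [|v p IH] u uK /=; first by rewrite connect0.
  case/andP => /existsP [f /andP[fD /eqP fuv]] vp.
  have uf : u \in ends f by rewrite fuv !inE eqxx.
  have vK : v \in K by apply: (subsetP (component_closed fD uf uK)); rewrite fuv !inE eqxx orbT.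
  apply: connect_trans (connect1 _) (IH v vK vp); apply/existsP; exists f.
  by rewrite fuv eqxx andbT inE fD (component_closed fD uf uK).
have from_x y : y \in K -> connect adjK x y.
  by rewrite inE => /connectP [p xp ->]; apply: walk xp; rewrite inE connect0.
move=> y z /from_x xy /from_x xz; apply: connect_trans xz.
by rewrite adjF_connect_sym.
Qed.

Lemma component_tec x : (forall h, ~ is_bridge ends setT D h) ->
  tec_edgeset ends (induced_edges (component x)).
Proof.
move=> D_bridgeless; set K := component x.
exists K; split; first by move=> f; rewrite inE => /andP[].
split; first exact: component_connected.
move=> h [S [SK _ _ Sh]]; apply: (D_bridgeless h).
apply: (bridge_of_cut (W := setT) (S := S)); [by move=> f _; apply: subsetT | exact: subsetT |].
rewrite -Sh; apply/setP => f; rewrite !inE; case fD: (f \in D) => //=.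
case one: (#|ends f :&: S| == 1%N); rewrite ?andbF // andbT.
have /set0Pn [a] : ends f :&: S != set0 by rewrite -card_gt0 (eqP one).
by rewrite in_setI => /andP[af aS]; rewrite (component_closed fD af (subsetP SK a aS)).
Qed.

End Components.

Section Series.
Hypothesis no_bridge : forall f, ~ is_bridge ends setT setT f.

Definition twocut f g := [exists S, ct S == [set f; g]].

Lemma twocutP f g : reflect (exists S, ct S = [set f; g]) (twocut f g).
Proof. by apply: (iffP existsP) => -[S /eqP]; exists S. Qed.

Lemma twocut_sym f g : twocut f g = twocut g f.
Proof. by apply/twocutP/twocutP => -[S Sfg]; exists S; rewrite Sfg setUC. Qed.

Lemma twocut_irr f : ~~ twocut f f.
Proof.
apply/twocutP => -[S Sf]; case/eqP: (cut_neq1 no_bridge S f).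
by rewrite Sf setUid.
Qed.

Lemma twocut_trans f a g : f != g -> twocut f a -> twocut a g -> twocut f g.
Proof.
move=> fg tfa tag; have fa : f != a by apply: contraTneq tfa => ->; apply: twocut_irr.
have ag : a != g by apply: contraTneq tag => ->; apply: twocut_irr.
case/twocutP: tfa => S Sfa; case/twocutP: tag => Y Yag.
apply/twocutP; exists (symdiff S Y); rewrite cut_symdiff Sfa Yag.
apply/setP => x; rewrite in_symdiff !inE.
case: (eqVneq x a) => [->|_]; first by rewrite eq_sym (negbTE fa) (negbTE ag).
by case: (eqVneq x f) => [->|]; rewrite ?(negbTE fg) ?orbF.
Qed.

Definition series f g := (f == g) || twocut f g.

Lemma series_refl f : series f f.
Proof. by rewrite /series eqxx. Qed.

Lemma series_sym f g : series f g = series g f.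
Proof. by rewrite /series eq_sym twocut_sym. Qed.

Lemma series_trans f a g : series f a -> series a g -> series f g.
Proof.
rewrite /series => /orP[/eqP-> //|tfa] /orP[/eqP<-|tag]; first by rewrite tfa orbT.
by case: eqVneq => //= fg; apply: twocut_trans tfa tag.
Qed.

Definition sclass c := [set g | series c g].

Lemma sclass_refl c : c \in sclass c.
Proof. by rewrite inE series_refl. Qed.

Lemma sclass_eq c g : g \in sclass c -> sclass g = sclass c.
Proof.
rewrite inE => cg; apply/setP => x; rewrite !inE.
by apply/idP/idP => [|cx]; [apply: series_trans | apply: series_trans cx]; rewrite // series_sym.
Qed.

Lemma sclass_disjoint c d : d \notin sclass c -> [disjoint sclass c & sclass d].
Proof.
move=> dc; apply/pred0P => x /=; apply/negbTE; apply: contra dc; rewrite !inE => /andP[cx dx].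
by apply: series_trans cx _; rewrite series_sym.
Qed.

Lemma sclass_twocut c a : a \in sclass c -> a != c -> exists Y, ct Y = [set c; a].
Proof. by rewrite inE /series eq_sym => /orP[/eqP->|/twocutP]; rewrite ?eqxx. Qed.

Lemma cut_sub_pair_sclass S h c : h \in ct S -> ct S \subset [set h; c] -> h \in sclass c.
Proof.
move=> hS sub; rewrite inE /series; case: (eqVneq c h) => //= ch.
apply/twocutP; exists S; apply/eqP.
rewrite eqEsubset (setUC [set c]) sub subUset !sub1set hS /=.
apply: contraT => cS; case/eqP: (cut_neq1 no_bridge S h).
apply/eqP; rewrite eqEsubset sub1set hS andbT; apply/subsetP => x xS.
by have := subsetP sub x xS; rewrite in_set2 in_set1 => /orP[// | /eqP cx]; rewrite -cx xS in cS.
Qed.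

(* Toggling the 2-cut [Y] with [ct Y = [set c; a]] trades [a] for [c] in the cut, so any cut can
   be reduced to meet [sclass c] in [c] at most, leaving it unchanged outside [sclass c]. *)
Lemma cut_reduce_sclass c S : exists S',
  (forall x, x \notin sclass c -> (x \in ct S') = (x \in ct S)) /\
  (forall x, x \in sclass c -> x \in ct S' -> x = c).
Proof.
move: {2}_.+1 (ltnSn #|ct S :&: (sclass c :\ c)|) => n; elim: n S => // n IH S.
case: (set_0Vmem (ct S :&: (sclass c :\ c))) => [S0 _ | [a]].
  exists S; split => // x xc xS; apply/eqP; apply: contraT => xNc.
  by have := in_set0 x; rewrite -S0 in_setI in_setD1 xS xNc xc.
rewrite in_setI in_setD1 => /and3P[aS ac aC] ltn.
have [Y Yca] := sclass_twocut aC ac.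
have SY : ct (symdiff S Y) = symdiff (ct S) [set c; a] by rewrite cut_symdiff Yca.
have fewer : (#|ct (symdiff S Y) :&: (sclass c :\ c)| < n)%N.
  rewrite -ltnS; apply: leq_trans ltn.
  rewrite (cardsD1 a (ct S :&: _)) in_setI in_setD1 aS ac aC add1n ltnS.
  apply/subset_leq_card/subsetP => x; rewrite SY !(in_setI, in_setD1, in_symdiff, in_set2).
  case: (eqVneq x c) => [->|_] /=; first by rewrite andbF.
  by case: (eqVneq x a) => [->|_] /=; rewrite ?aS ?addbF.
have [S' [out inC]] := IH _ fewer.
exists S'; split => // x xC; rewrite out // SY in_symdiff in_set2.
case: (eqVneq x c) => [xc|_]; first by rewrite xc sclass_refl in xC.
by case: (eqVneq x a) => [xa|_]; [rewrite xa aC in xC | rewrite addbF].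
Qed.

Lemma tec_mem_sclass F c g : tec_edgeset ends F -> g \in sclass c -> (g \in F) = (c \in F).
Proof.
move=> tF gc; have [-> // | gNc] := eqVneq g c.
have [Y Ycg] := sclass_twocut gc gNc.
by apply/esym/(tec_cut_pair (S := Y) tF); rewrite Ycg ?subsetIr // !inE eqxx ?orbT.
Qed.

Lemma bridgeless_compl_sclass c h : ~ is_bridge ends setT (~: sclass c) h.
Proof.
move=> [S [_ _ _]]; rewrite cutE => Sh.
have hS x : (x \in ~: sclass c :&: ct S) = (x == h) by rewrite Sh in_set1.
have /andP[hC hS0] : (h \notin sclass c) && (h \in ct S) by rewrite -in_setC -in_setI hS.
have [S' [out inC]] := cut_reduce_sclass c S.
apply: (negP hC); apply: (cut_sub_pair_sclass (S := S')); first by rewrite out.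
apply/subsetP => x xS'; rewrite in_set2; have [xC | xNC] := boolP (x \in sclass c).
  by rewrite (inC x xC xS') eqxx orbT.
by rewrite -hS in_setI in_setC xNC -out ?xS'.
Qed.

Lemma cut_sub_triple_sclass S h a b : h \in ct S -> b \notin ct S ->
  ct S \subset [set h; a; b] -> h \in sclass a.
Proof.
move=> hS bS sub; apply: (cut_sub_pair_sclass hS); apply/subsetP => x xS.
by case/setUP: (subsetP sub x xS) => // /set1P xb; move: bS; rewrite -xb xS.
Qed.

(* Reducing a cut with lone edge [h] in [~: (sclass e :|: sclass c)] against both classes
   leaves a cut inside [[set h; e; c]]. *)
Lemma bridgeless_compl_sclassU e c h : ~ in_3cut ends e ->
  ~ is_bridge ends setT (~: (sclass e :|: sclass c)) h.
Proof.
move=> no3; have [ce | ceN] := boolP (c \in sclass e).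
  by rewrite (sclass_eq ce) setUid; apply: bridgeless_compl_sclass.
move=> [S [_ _ _]]; rewrite cutE => Sh.
have hS x : (x \in ~: (sclass e :|: sclass c) :&: ct S) = (x == h) by rewrite Sh in_set1.
have /and3P[he hc hS0] : [&& h \notin sclass e, h \notin sclass c & h \in ct S].
  by move: (hS h); rewrite eqxx in_setI in_setC in_setU negb_or -andbA.
have [S1 [out1 in1]] := cut_reduce_sclass c S.
have [S2 [out2 in2]] := cut_reduce_sclass e S1.
have hS2 : h \in ct S2 by rewrite out2 // out1.
have S2sub : ct S2 \subset [set h; e; c].
  apply/subsetP => x xS2; rewrite !inE.
  have [xe | xNe] := boolP (x \in sclass e); first by rewrite (in2 x xe xS2) eqxx orbT.
  rewrite out2 // in xS2; have [xc | xNc] := boolP (x \in sclass c).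
    by rewrite (in1 x xc xS2) eqxx orbT.
  by rewrite -hS in_setI in_setC in_setU negb_or xNe xNc -out1 ?xS2.
have [cS2 | cNS2] := boolP (c \in ct S2); last first.
  by case/negP: he; apply: cut_sub_triple_sclass cNS2 S2sub.
have [eS2 | eNS2] := boolP (e \in ct S2); last first.
  by case/negP: hc; apply: (cut_sub_triple_sclass hS2 eNS2); rewrite setUAC.
apply: no3; apply: (in_3cut_of_cut (S := S2) (y := h) (z := c)).
- apply/eqP; rewrite eqEsubset (setUC [set e]) S2sub !subUset !sub1set.
  by rewrite eS2 hS2 cS2.
- by apply: contraNneq he => <-; apply: sclass_refl.
- by apply: contraNneq ceN => <-; apply: sclass_refl.
- by apply: contraNneq hc => ->; apply: sclass_refl.
Qed.

Lemma tec_separating_3cut S e f g : ct S = [set e; f; g] -> e != f -> e != g -> f != g ->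
  exists F, [/\ tec_edgeset ends F, e \in F, f \in F & g \notin F].
Proof.
move=> Sefg ef eg fg; set D := ~: sclass g.
have eD : e \in D.
  rewrite in_setC; apply/negP => eC; have [Y Yge] := sclass_twocut eC eg.
  case/eqP: (cut_neq1 no_bridge (symdiff S Y) f); rewrite cut_symdiff Sefg Yge.
  apply/setP => x; rewrite in_symdiff !in_setU !in_set1.
  case: (eqVneq x e) => [->|_]; first by rewrite (negbTE ef) (negbTE eg).
  by case: (eqVneq x g) => [->|_]; rewrite ?orbT ?orbF ?addbF // eq_sym (negbTE fg).
have [a ae] : exists a, a \in ends e.
  by apply/set0Pn; rewrite -card_gt0 card_ends.
have tF := component_tec a (@bridgeless_compl_sclass g).
have eF := induced_component_mem eD ae.
exists (induced_edges D (component D a)); split => //; last by rewrite !inE series_refl.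
rewrite -(tec_cut_pair (S := S) (a := e) tF) // Sefg ?inE ?eqxx ?orbT //.
apply/subsetP => x /setIP [xF]; rewrite !inE => /orP[/orP[]|] /eqP xE; rewrite xE ?eqxx ?orbT //.
by move: xF; rewrite xE !inE series_refl.
Qed.

Section Polytope.
Hypothesis G_connected : sub_connected ends setT setT.
Variable R : realFieldType.
Local Open Scope ring_scope.

Local Notation chiT := (chi R [set: Ed]).

Definition tec_edgesetb F : bool :=
  if excluded_middle_informative (tec_edgeset ends F) then true else false.

Lemma tec_edgesetP F : reflect (tec_edgeset ends F) (tec_edgesetb F).
Proof. by rewrite /tec_edgesetb; case: excluded_middle_informative => h; constructor. Qed.

Definition tec_span := <<[seq chi R F | F <- enum tec_edgesetb]>>%VS.

Definition tec_span_avoiding e :=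
  <<[seq chi R F | F <- enum [pred F | tec_edgesetb F && (e \notin F)]]>>%VS.

Lemma chiE (F : {set Ed}) f : chi R F f = (f \in F)%:R.
Proof. by rewrite ffunE; case: (f \in F). Qed.

Lemma chi_tec_span F : tec_edgeset ends F -> chi R F \in tec_span.
Proof. by move=> tF; apply/memv_span/map_f; rewrite mem_enum; apply/tec_edgesetP. Qed.

Lemma chi_tec_span_avoiding e F : tec_edgeset ends F -> e \notin F ->
  chi R F \in tec_span_avoiding e.
Proof.
by move=> tF eF; apply/memv_span/map_f; rewrite mem_enum inE eF andbT; apply/tec_edgesetP.
Qed.

Lemma tec_edgeset0 : tec_edgeset ends set0.
Proof.
exists set0; split; first by move=> f; rewrite inE.
split; first by move=> x y; rewrite inE.
by move=> h [S [S0 SN _ _]]; move: SN; rewrite (subset0 S) in S0; rewrite (eqP S0) eqxx.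
Qed.

Lemma tec_edgesetT : tec_edgeset ends setT.
Proof. by exists setT; split => // f _; apply: subsetT. Qed.

Lemma chi0 : chi R (set0 : {set Ed}) = 0.
Proof. by apply/ffunP => f; rewrite chiE inE !ffunE. Qed.

Lemma TECSP_chi F : tec_edgeset ends F -> TECSP ends (chi R F).
Proof.
move=> tF; exists [ffun G => (G == F)%:R]; split.
- by move=> G; rewrite ffunE ler0n.
- by move=> G; rewrite ffunE; case: (eqVneq G F) => [-> | _] //; rewrite eqxx.
- by rewrite (bigD1 F) //= ffunE eqxx big1 ?addr0 // => G /negbTE GF; rewrite ffunE GF.
- rewrite (bigD1 F) //= ffunE eqxx scale1r big1 ?addr0 // => G /negbTE GF.
  by rewrite ffunE GF scale0r.
Qed.

Lemma TECSP_ge0 (x : vec Ed R) e : TECSP ends x -> 0 <= x e.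
Proof.
move=> [lam [lam0 _ _ ->]]; rewrite sum_ffunE; apply: sumr_ge0 => F _.
by rewrite ffunE chiE mulr_ge0.
Qed.

Lemma TECSP_span (x : vec Ed R) : TECSP ends x -> x \in tec_span.
Proof.
move=> [lam [_ lamF _ ->]]; apply: memv_suml => F _.
have [-> | nz] := eqVneq (lam F) 0; first by rewrite scale0r mem0v.
exact/memvZ/chi_tec_span/lamF.
Qed.

Lemma TECSP_face_span (x : vec Ed R) e : TECSP ends x -> x e = 0 -> x \in tec_span_avoiding e.
Proof.
move=> [lam [lam0 lamF _ xE]] xe.
have lam_e (F : {set Ed}) : e \in F -> lam F = 0.
  move=> eF; have := @psumr_eq0P _ _ predT (fun G => lam G * chi R G e) _ _ F isT.
  rewrite chiE eF mulr1; apply => [G _|]; first by rewrite chiE mulr_ge0.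
  by apply: etrans xe; rewrite xE sum_ffunE; apply: eq_bigr => G _; rewrite !ffunE.
rewrite xE; apply: memv_suml => F _; have [-> | nz] := eqVneq (lam F) 0.
  by rewrite scale0r mem0v.
by apply/memvZ/chi_tec_span_avoiding; [apply: lamF | apply: contra nz => /lam_e ->].
Qed.

Lemma TECSP_affdim : is_affdim (TECSP (R:=R) ends) (\dim tec_span)%:Z.
Proof.
apply: is_affdim_span; first by rewrite -chi0; apply/TECSP_chi/tec_edgeset0.
- by move=> y /mapP [F]; rewrite mem_enum => /tec_edgesetP tF ->; apply: TECSP_chi.
- exact: TECSP_span.
Qed.

Lemma TECSP_face_affdim e :
  is_affdim (fun x : vec Ed R => TECSP ends x /\ x e = 0) (\dim (tec_span_avoiding e))%:Z.
Proof.
apply: is_affdim_span.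
- by rewrite -chi0 chiE inE; split => //; apply/TECSP_chi/tec_edgeset0.
- move=> y /mapP [F]; rewrite mem_enum inE => /andP[/tec_edgesetP tF eF] ->.
  by rewrite chiE (negbTE eF); split => //; apply: TECSP_chi.
- by move=> x [tx xe]; apply: TECSP_face_span.
Qed.

Lemma tec_span_avoiding_sub e : (tec_span_avoiding e <= tec_span)%VS.
Proof.
apply/span_subvP => y /mapP [F]; rewrite mem_enum inE => /andP[/tec_edgesetP tF _] ->.
exact: chi_tec_span.
Qed.

Lemma tec_span_avoiding_eq0 e u : u \in tec_span_avoiding e -> u e = 0.
Proof.
apply: (linear_span0 (phi := fun u : vec Ed R => u e)) => [a v w | y /mapP [F]].
  by rewrite !ffunE.
by rewrite mem_enum inE => /andP[_ eF] ->; rewrite chiE (negbTE eF).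
Qed.

Lemma chiT_notin_tec_span_avoiding e : chiT \notin tec_span_avoiding e.
Proof. by apply/negP => /tec_span_avoiding_eq0/eqP; rewrite chiE inE oner_eq0. Qed.

Lemma tec_span_avoiding_3cut S e f g u : ct S = [set e; f; g] ->
  u \in tec_span_avoiding e -> u f = u g.
Proof.
move=> Sefg uE; apply/eqP; rewrite -subr_eq0; apply/eqP; move: u uE.
apply: (linear_span0 (phi := fun u : vec Ed R => u f - u g)) => [a v w | y /mapP [F]].
  by rewrite !ffunE scalerBr opprD addrACA.
rewrite mem_enum inE => /andP[/tec_edgesetP tF eF] ->; rewrite !chiE.
rewrite (tec_cut_pair (S := S) (a := f) (b := g) tF) ?subrr // ?Sefg ?inE ?eqxx ?orbT //.
apply/subsetP => x /setIP [xF]; rewrite !inE => /orP[/orP[] |] /eqP xE; rewrite xE ?eqxx ?orbT //.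
by rewrite -xE xF in eF.
Qed.

Lemma tec_chi_sclass F c g : tec_edgeset ends F -> g \in sclass c -> chi R F g = chi R F c.
Proof. by move=> tF gc; rewrite !chiE (tec_mem_sclass tF gc). Qed.

(* Each class [sclass c] occurs once for each of its [#|sclass c|] members [c]. *)
Lemma vec_sclass_decomp (x : vec Ed R) : (forall c g, g \in sclass c -> x g = x c) ->
  x = \sum_c (x c / #|sclass c|%:R) *: chi R (sclass c).
Proof.
move=> x_const; apply/ffunP => f; rewrite sum_ffunE.
have term c : ((x c / #|sclass c|%:R) *: chi R (sclass c)) f =
    if c \in sclass f then x f / #|sclass f|%:R else 0.
  rewrite !ffunE; have [cf | cNf] := boolP (c \in sclass f).
    have fc : f \in sclass c by rewrite (sclass_eq cf) sclass_refl.
    by rewrite fc (sclass_eq cf) (x_const c f fc); apply: mulr1.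
  case: ifP => [fc | _]; last exact: mulr0.
  by rewrite (sclass_eq fc) sclass_refl in cNf.
rewrite (eq_bigr _ (fun c _ => term c)) -big_mkcond sumr_const.
rewrite -(mulr_natr (x f / #|sclass f|%:R : R)) divfK //.
by rewrite pnatr_eq0 -lt0n card_gt0; apply/set0Pn; exists f; apply: sclass_refl.
Qed.

Lemma chi_bridgeless_span e D : (forall h, ~ is_bridge ends setT D h) -> e \notin D ->
  chi R D \in tec_span_avoiding e.
Proof.
move=> D_bridgeless eD.
have -> : chi R D = \sum_(K in components D) chi R (induced_edges D K).
  apply/ffunP => f; rewrite sum_ffunE chiE.
  have [fD | fND] := boolP (f \in D); last first.
    by rewrite big1 // => K _; rewrite chiE inE (negbTE fND).
  have [a af] : exists a, a \in ends f by apply/set0Pn; rewrite -card_gt0 card_ends.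
  rewrite (bigD1 (component D a)) /=; last by apply/imsetP; exists a.
  rewrite chiE induced_component_mem // big1 ?addr0 // => K /andP[KD Ka].
  suff fK : f \notin induced_edges D K by rewrite chiE (negbTE fK).
  by apply: contra Ka => fK; rewrite (component_of_induced KD fK af).
apply: memv_suml => K /imsetP [x _ ->]; apply: chi_tec_span_avoiding.
  exact: component_tec.
by rewrite inE (negbTE eD).
Qed.

Lemma chi_sclass_span e c : ~ in_3cut ends e ->
  chi R (sclass c) \in (tec_span_avoiding e + <[chiT]>)%VS.
Proof.
move=> no3; have [ec | eNc] := boolP (e \in sclass c).
  have -> : chi R (sclass c) = chiT - chi R (~: sclass c).
    by apply/ffunP => f; rewrite !ffunE in_setC in_setT; case: (f \in _); rewrite ?subr0 ?subrr.
  rewrite addrC; apply: memv_add; last exact: memv_line.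
  rewrite memvN; apply: chi_bridgeless_span; first exact: bridgeless_compl_sclass.
  by rewrite in_setC ec.
have disj := sclass_disjoint eNc.
have -> : chi R (sclass c) = chi R (~: sclass e) - chi R (~: (sclass e :|: sclass c)).
  apply/ffunP => f; rewrite !ffunE !in_setC in_setU.
  have [fc | fNc] := boolP (f \in sclass c); last by rewrite orbF subrr.
  by rewrite (disjointFr disj fc) subr0.
apply: (subvP (addvSl _ _)); apply: memvB; apply: chi_bridgeless_span.
- exact: bridgeless_compl_sclass.
- by rewrite in_setC sclass_refl.
- by move=> h; apply: (bridgeless_compl_sclassU no3).
- by rewrite in_setC in_setU sclass_refl.
Qed.

Lemma dim_tec_span_no3cut e : ~ in_3cut ends e ->
  \dim tec_span = (\dim (tec_span_avoiding e)).+1.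
Proof.
move=> no3; rewrite -(dim_add_line (chiT_notin_tec_span_avoiding e)).
apply/eqP; rewrite eqn_leq; apply/andP; split; apply: dimvS.
  apply/span_subvP => y /mapP [F]; rewrite mem_enum => /tec_edgesetP tF ->.
  rewrite (vec_sclass_decomp (fun c g => tec_chi_sclass tF (g:=g) (c:=c))).
  by apply: memv_suml => c _; apply/memvZ/chi_sclass_span.
by rewrite subv_add tec_span_avoiding_sub -memvE (chi_tec_span tec_edgesetT).
Qed.

Lemma dim_tec_span_3cut e : in_3cut ends e ->
  ((\dim (tec_span_avoiding e)).+2 <= \dim tec_span)%N.
Proof.
move=> [S [_ _ eS S3]]; have [f [g [Sefg ef eg fg]]] := cards3_mem eS S3.
have [F [tF eF fF gF]] := tec_separating_3cut Sefg ef eg fg.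
set W := (tec_span_avoiding e + <[chiT]>)%VS.
have W_fg w : w \in W -> w f = w g.
  case/memv_addP => u uE [_ /vlineP [k ->] ->].
  by rewrite !ffunE (tec_span_avoiding_3cut Sefg uE) !in_setT.
have chiF : chi R F \notin W.
  by apply/negP => /W_fg /eqP; rewrite !chiE fF (negbTE gF) pnatr_eq0.
rewrite -(dim_add_line (chiT_notin_tec_span_avoiding e)) -/W -(dim_add_line chiF).
apply: dimvS; rewrite !subv_add tec_span_avoiding_sub -!memvE.
by rewrite (chi_tec_span tec_edgesetT) (chi_tec_span tF).
Qed.

End Polytope.

End Series.
End Cuts.

Local Open Scope ring_scope.

Theorem mainTheorem5 (R : realFieldType) (V Ed : finType)
  (ends : Ed -> {set V})
  (Hends : forall f, #|ends f| = 2%N) (Hsimple : injective ends)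
  (HG : two_edge_connected ends setT setT) (e : Ed) :
  nonneg_facet (TECSP (R:=R) ends) e <-> ~ in_3cut ends e.
Proof.
have [G_connected no_bridge] := HG.
have dim_polytope := is_affdim_unique (TECSP_affdim ends R).
have dim_face := is_affdim_unique (TECSP_face_affdim ends R e).
split => [[_ [d [Pd face_d]]] e3 | no3].
  have := dim_tec_span_3cut Hends no_bridge G_connected R e3.
  move: (dim_face _ face_d); rewrite -(dim_polytope _ Pd) => /eqP.
  by rewrite eq_sym subr_eq -PoszD eqz_nat addn1 => /eqP ->; rewrite ltnn.
split; first by move=> x; apply: TECSP_ge0.
exists (\dim (tec_span ends R))%:Z; split; first exact: TECSP_affdim.
rewrite (dim_tec_span_no3cut Hends no_bridge G_connected R no3) -addn1 PoszD addrK.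
exact: TECSP_face_affdim.
Qed.
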